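(* Let $\Theta$ and $U$ be compact metric spaces, $\rho:\Theta\to L_1(\mathcal{H})$ a quantum statistical model, and $f:\Theta\times U\to[0,\infty)$ continuous. Put $\kappa_u(\theta):=f(\theta,u)\rho(\theta)$. Then for every $\epsilon>0$ and every compact $K\subseteq\Theta$ there exist a trace-class operator $W$ and $\delta>0$ such that $$-W\le\kappa_u(\theta)-\kappa_u(\eta)\le W\quad\text{for all }(\theta,\eta)\in K_\delta\text{ and all }u\in U,$$ and $\mathrm{Tr}\,W\le\epsilon$.
   Context: $\mathcal{H}$ is a Hilbert space, $L_1(\mathcal{H})$ its trace-class operators; for self-adjoint operators $A\ge B$ means $A-B$ is positive. With $d$ the metric on $\Theta$, for compact $K\subseteq\Theta$ and $\delta>0$ let $K_\delta:=\{(\theta,\eta)\in K\times K: d(\theta,\eta)<\delta\}$. For $T:\Theta\to L_1(\mathcal{H})$ with self-adjoint values, $\omega_T(K_\delta):=\inf\{\|X\|_1: X\in L_1(\mathcal{H}),\ -X\le T(\theta)-T(\eta)\le X\ \forall(\theta,\eta)\in K_\delta\}$, and $T$ is regular if $\lim_{\delta\to0}\omega_T(K_\delta)=0$ for every compact $K$. A quantum statistical model is a map $\rho:\Theta\to L_1(\mathcal{H})$ with $\rho(\theta)\ge0$, $\mathrm{Tr}\,\rho(\theta)=1$, which is injective and regular. *)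

From HB Require Import structures.
From mathcomp Require Import all_boot all_order all_algebra.
From mathcomp Require Import all_classical all_reals all_analysis.
From mathcomp Require Import complex.

Set Implicit Arguments.
Unset Strict Implicit.
Unset Printing Implicit Defensive.

Import Order.TTheory GRing.Theory Num.Theory.
Import numFieldNormedType.Exports.

Local Open Scope classical_set_scope.
Local Open Scope ring_scope.
Local Open Scope complex_scope.

(* Inner product antilinear in the first and linear in the second slot.   *)
Record HilbertSpace (R : realType) := {
  hs_car :> lmodType R[i] ;
  hs_ip : hs_car -> hs_car -> R[i] ;
  hs_ip_linear : forall (a : R[i]) (x y z : hs_car),
      hs_ip x (a *: y + z) = a * hs_ip x y + hs_ip x z ;
  hs_ip_conj : forall x y : hs_car, hs_ip y x = (hs_ip x y)^* ;
  hs_ip_ge0 : forall x : hs_car, 0 <= hs_ip x x ;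
  hs_ip_eq0 : forall x : hs_car, hs_ip x x = 0 -> x = 0 ;
  hs_complete : forall u : nat -> hs_car,
      (forall e : R, 0 < e -> exists N : nat, forall m n : nat,
          (N <= m)%N -> (N <= n)%N ->
          Num.sqrt (complex.Re (hs_ip (u m - u n) (u m - u n))) < e) ->
      exists l : hs_car, forall e : R, 0 < e -> exists N : nat,
          forall n : nat, (N <= n)%N ->
          Num.sqrt (complex.Re (hs_ip (u n - l) (u n - l))) < e
}.

Section Operators.
Context {R : realType} (H : HilbertSpace R).

Definition ip : H -> H -> R[i] := @hs_ip R H.

Definition hnorm (x : H) : R := Num.sqrt (complex.Re (ip x x)).

Definition bounded_op (A : H -> H) : Prop :=
  (forall (a : R[i]) (x y : H), A (a *: x + y) = a *: A x + A y) /\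
  exists M : R, forall x : H, hnorm (A x) <= M * hnorm x.

Definition self_adjoint (A : H -> H) : Prop :=
  forall x y : H, ip x (A y) = ip (A x) y.

(* positivity A >= 0 : <x, A x> is a nonnegative real for all x *)
Definition psd (A : H -> H) : Prop := forall x : H, 0 <= ip x (A x).

Definition loewner_le (A B : H -> H) : Prop := psd (fun x => B x - A x).

Definition orthonormal_basis (E : set H) : Prop :=
  (forall e, E e -> ip e e = 1) /\
  (forall e e', E e -> E e' -> e <> e' -> ip e e' = 0) /\
  (forall x : H, (forall e, E e -> ip e x = 0) -> x = 0).

(* trace of a positive operator: sum_{e in E} <e, A e>, for an orthonormal
   basis E (basis independent; we take the sup over all bases, which is
   that common value). *)
Definition ptrace (A : H -> H) : \bar R :=
  ereal_sup [set (\esum_(e in E) ((complex.Re (ip e (A e)))%:E))%E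
            | E in orthonormal_basis].

(* positive trace-class operators; for these ||A||_1 = Tr A *)
Definition pos_trace_class (A : H -> H) : Prop :=
  [/\ bounded_op A, psd A & (ptrace A < +oo)%E].

(* omega_T(K_delta) for T : Theta -> operators.  Any X with
   -X <= T th - T et <= X on a nonempty K_delta is positive, so its trace
   norm is its trace. *)
Definition omegaT {Theta : metricType R} (T : Theta -> (H -> H))
    (K : set Theta) (delta : R) : \bar R :=
  ereal_inf [set ptrace X | X in
    [set X | pos_trace_class X /\
      forall th et, K th -> K et -> mdist th et < delta ->
        loewner_le (fun x => - X x) (fun x => T th x - T et x) /\
        loewner_le (fun x => T th x - T et x) X]].

Definition regular_map {Theta : metricType R} (T : Theta -> (H -> H)) : Prop :=
  (forall th, bounded_op (T th) /\ self_adjoint (T th)) /\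
  forall K : set Theta, compact K ->
    omegaT T K delta @[delta --> (0:R)^'+] --> (0%R)%:E.

Definition quantum_model {Theta : metricType R} (rho : Theta -> (H -> H)) : Prop :=
  [/\ forall th, pos_trace_class (rho th),
      forall th, ptrace (rho th) = 1%:E,
      injective rho &
      regular_map rho].

End Operators.

From HB Require Import structures.
From mathcomp Require Import all_boot all_order all_algebra.
From mathcomp Require Import all_classical all_reals all_analysis.
From mathcomp Require Import complex.
From mathcomp Require Import lra ring.
Import Order.TTheory GRing.Theory Num.Theory.
Import numFieldTopology.Exports numFieldNormedType.Exports.
Local Open Scope classical_set_scope.
Local Open Scope ring_scope.
Local Open Scope complex_scope.

(* kappa_u(th) - kappa_u(et) = f(th,u) (rho th - rho et) + (f(th,u) - f(et,u)) rho et.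
   Regularity of rho bounds the first difference by a trace-class X of small trace
   for th, et close.  Covering K by finitely many small balls shows that rho is
   dominated on K by a single trace-class Y.  With M a bound of f and c a modulus
   of uniform continuity of f in its first variable, W := (M + 1) X + c Y works,
   and its trace is small once X and c are. *)

Section InnerProduct.
Context {R : realType} {H : HilbertSpace R}.
Implicit Types (x y z : H) (a : R[i]).

Lemma ipDr x y z : ip x (y + z) = ip x y + ip x z.
Proof. by rewrite /ip -(scale1r y) hs_ip_linear mul1r scale1r. Qed.

Lemma ip0r x : ip x 0 = 0.
Proof. by apply: (@addrI _ (ip x 0)); rewrite -ipDr !addr0. Qed.

Lemma ipZr a x y : ip x (a *: y) = a * ip x y.
Proof. by rewrite /ip -(addr0 (a *: y)) hs_ip_linear -/(ip x 0) ip0r addr0. Qed.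

Lemma ipNr x y : ip x (- y) = - ip x y.
Proof. by rewrite -scaleN1r ipZr mulN1r. Qed.

Lemma ipBr x y z : ip x (y - z) = ip x y - ip x z.
Proof. by rewrite ipDr ipNr. Qed.

Lemma ip_conj x y : ip y x = (ip x y)^*.
Proof. exact: hs_ip_conj. Qed.

Lemma ipDl x y z : ip (x + y) z = ip x z + ip y z.
Proof. by rewrite ip_conj ipDr rmorphD /= -!ip_conj. Qed.

Lemma ipZl a x y : ip (a *: x) y = a^* * ip x y.
Proof. by rewrite ip_conj ipZr rmorphM /= -!ip_conj. Qed.

Lemma ipNl x y : ip (- x) y = - ip x y.
Proof. by rewrite -scaleN1r ipZl rmorphN rmorph1 mulN1r. Qed.

Lemma hnorm_ge0 x : 0 <= hnorm x.
Proof. exact: sqrtr_ge0. Qed.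

Lemma hnorm_sqr x : hnorm x ^+ 2 = complex.Re (ip x x).
Proof.
by rewrite /hnorm sqr_sqrtr //; have := hs_ip_ge0 x; rewrite lecE => /andP[].
Qed.

Lemma hnormZ_sqr (r : R) x : hnorm (r%:C *: x) ^+ 2 = r ^+ 2 * hnorm x ^+ 2.
Proof.
by rewrite !hnorm_sqr ipZl ipZr; case: (ip x x) => ? ?; simpc; rewrite mulrA.
Qed.

Lemma hnormD_sqr x y :
  hnorm (x + y) ^+ 2 <= 2 * hnorm x ^+ 2 + 2 * hnorm y ^+ 2.
Proof.
have := sqr_ge0 (hnorm (x - y)); rewrite !hnorm_sqr.
rewrite !ipDl !ipDr !ipNl !ipNr.
case: (ip x x) => ? ?; case: (ip x y) => ? ?; case: (ip y x) => ? ?;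
case: (ip y y) => ? ?; simpc => /=; lra.
Qed.

Lemma loewner_leE (A B : H -> H) :
  loewner_le A B <-> forall x, ip x (A x) <= ip x (B x).
Proof. by split=> le x; [rewrite -subr_ge0 -ipBr | rewrite /psd ipBr subr_ge0]. Qed.

Lemma psd_Re {A : H -> H} : psd A -> forall x, 0 <= complex.Re (ip x (A x)).
Proof. by move=> psdA x; have := psdA x; rewrite lecE => /andP[]. Qed.

End InnerProduct.

Lemma esumZl_le {R : realType} {T : choiceType} (E : set T) (g : T -> R) (a : R) :
  0 <= a -> (forall t, 0 <= g t) ->
  (\esum_(t in E) (a * g t)%:E <= a%:E * \esum_(t in E) (g t)%:E)%E.
Proof.
move=> a0 g0; apply: ge_ereal_sup => _ [X [finX XE] <-].
rewrite (eq_fsbigr (fun t => (a%:E * (g t)%:E)%E)); last by move=> t _; rewrite EFinM.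
rewrite -ge0_mule_fsumr; last by move=> t; rewrite lee_fin.
apply: lee_wpmul2l; first by rewrite lee_fin.
by apply: ereal_sup_ubound; exists X.
Qed.

Section TraceClass.
Context {R : realType} {H : HilbertSpace R}.
Implicit Types (A B : H -> H) (a b : R).

Lemma bounded_op_comb a b A B : bounded_op A -> bounded_op B ->
  bounded_op (fun x => a%:C *: A x + b%:C *: B x).
Proof.
move=> [linA [MA boundA]] [linB [MB boundB]]; split.
  move=> k x y; rewrite linA linB !scalerDr !scalerA [k * _]mulrC [k * b%:C]mulrC.
  by rewrite addrACA.
pose K := 2 * a ^+ 2 * MA ^+ 2 + 2 * b ^+ 2 * MB ^+ 2.
have K0 : 0 <= K by rewrite /K; nra.
exists (Num.sqrt K) => x.
have sqr_bound (C : H -> H) M : hnorm (C x) <= M * hnorm x ->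
    hnorm (C x) ^+ 2 <= M ^+ 2 * hnorm x ^+ 2.
  by move=> le; rewrite -exprMn ler_sqr ?nnegrE ?hnorm_ge0 //;
    apply: le_trans le; apply: hnorm_ge0.
rewrite -ler_sqr ?nnegrE ?mulr_ge0 ?sqrtr_ge0 ?hnorm_ge0 //.
rewrite exprMn (sqr_sqrtr K0); apply: le_trans (hnormD_sqr _ _) _.
rewrite !hnormZ_sqr.
have := sqr_bound _ _ (boundA x); have := sqr_bound _ _ (boundB x).
have := sqr_ge0 a; have := sqr_ge0 b; rewrite /K; nra.
Qed.

Lemma ptrace_comb {a b A B} : 0 <= a -> 0 <= b -> psd A -> psd B ->
  (ptrace (fun x => (a%:C *: A x + b%:C *: B x)%R) <=
   a%:E * ptrace A + b%:E * ptrace B)%E.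
Proof.
move=> a0 b0 psdA psdB; apply: ge_ereal_sup => _ [E baseE <-].
rewrite (eq_esum (b := fun e => (a * complex.Re (ip e (A e)))%:E +
   (b * complex.Re (ip e (B e)))%:E)); last first.
  move=> e _; rewrite ipDr !ipZr -EFinD; congr (_%:E).
  by case: (ip e (A e)) => ? ?; case: (ip e (B e)) => ? ?; simpc.
rewrite esumD => [|e _|e _]; last 2 first.
- by rewrite lee_fin mulr_ge0 // psd_Re.
- by rewrite lee_fin mulr_ge0 // psd_Re.
have trace_ub C c : 0 <= c -> psd C ->
    (\esum_(e in E) (c * complex.Re (ip e (C e)))%:E <= c%:E * ptrace C)%E.
  move=> c0 psdC; apply: le_trans (esumZl_le E _ _ c0 (psd_Re psdC)) _.
  by apply: lee_wpmul2l; [rewrite lee_fin | apply: ereal_sup_ubound; exists E].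
by apply: leeD; apply: trace_ub.
Qed.

Lemma ptrace_comb_ub {a b A B} {r r' : R} : 0 <= a -> 0 <= b -> psd A -> psd B ->
  (ptrace A <= r%:E)%E -> (ptrace B <= r'%:E)%E ->
  (ptrace (fun x => (a%:C *: A x + b%:C *: B x)%R) <= (a * r + b * r')%:E)%E.
Proof.
move=> a0 b0 psdA psdB trA trB.
apply: le_trans (ptrace_comb a0 b0 psdA psdB) _.
by rewrite EFinD !EFinM; apply: leeD; apply: lee_wpmul2l; rewrite ?lee_fin.
Qed.

Lemma pos_trace_class_comb a b A B : 0 <= a -> 0 <= b ->
  pos_trace_class A -> pos_trace_class B ->
  pos_trace_class (fun x => a%:C *: A x + b%:C *: B x).
Proof.
move=> a0 b0 [bA psdA trA] [bB psdB trB]; split.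
- exact: bounded_op_comb.
- move=> x; rewrite ipDr !ipZr.
  by apply: addr_ge0; apply: mulr_ge0; rewrite ?ler0c.
- apply: le_lt_trans (ptrace_comb a0 b0 psdA psdB) _.
  by apply: lte_add_pinfty; apply: lte_mul_pinfty; rewrite ?lee_fin.
Qed.

Lemma pos_trace_class_add {A B} : pos_trace_class A -> pos_trace_class B ->
  pos_trace_class (fun x => A x + B x) /\
  (ptrace (fun x => (A x + B x)%R) <= ptrace A + ptrace B)%E.
Proof.
move=> ptcA ptcB.
have -> : (fun x => A x + B x) = (fun x => 1%:C *: A x + 1%:C *: B x).
  by apply: funext => x; rewrite !scale1r.
split; first exact: pos_trace_class_comb.
by rewrite -[ptrace A]mul1e -[ptrace B]mul1e;
  apply: ptrace_comb => //; [case: ptcA | case: ptcB].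
Qed.

End TraceClass.

Lemma ler_mul_diff (R : numDomainType) (a a' M c p q t t' : R) :
  0 <= a <= M -> - c <= a - a' <= c -> - p <= t - t' <= p -> 0 <= t' <= q ->
  - (M * p + c * q) <= a * t - a' * t' <= M * p + c * q.
Proof.
move=> /andP[a0 aM] /andP[ca ac] /andP[pt tp] /andP[t'0 t'q].
have ge0_of_sym (z : R) : - z <= z -> 0 <= z.
  by rewrite -subr_ge0 opprK -mulr2n pmulrn_lge0.
have p0 := ge0_of_sym _ (le_trans pt tp); have c0 := ge0_of_sym _ (le_trans ca ac).
have -> : a * t - a' * t' = a * (t - t') + (a - a') * t' by ring.
have ap_Mp : a * p <= M * p by rewrite ler_wpM2r.
have ct_cq : c * t' <= c * q by rewrite ler_wpM2l.
rewrite opprD; apply/andP; split; apply: lerD.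
- by apply: le_trans (ler_wpM2l a0 pt); rewrite mulrN lerN2.
- by apply: le_trans (ler_wpM2r t'0 ca); rewrite mulNr lerN2.
- by apply: le_trans ap_Mp; rewrite ler_wpM2l.
- by apply: le_trans ct_cq; rewrite ler_wpM2r.
Qed.

Section Domination.
Context {R : realType} {H : HilbertSpace R}.
Implicit Types (A B X Y : H -> H).

Lemma loewner_le_diff_comb (a a' M c : R) A B X Y :
  0 <= a <= M -> `|a - a'| <= c ->
  loewner_le (fun x => - X x) (fun x => A x - B x) ->
  loewner_le (fun x => A x - B x) X -> psd B -> loewner_le B Y ->
  let D := fun x => a%:C *: A x - a'%:C *: B x in
  let W := fun x => M%:C *: X x + c%:C *: Y x in
  loewner_le (fun x => - W x) D /\ loewner_le D W.
Proof.
move=> aM; rewrite ler_norml => ac lo hi psdB BY D W.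
rewrite !loewner_leE in lo hi BY *.
have aMC : 0 <= a%:C <= M%:C by rewrite ler0c lecR.
have acC : - c%:C <= a%:C - a'%:C <= c%:C by rewrite -raddfN -raddfB !lecR.
suff le x : - ip x (W x) <= ip x (D x) <= ip x (W x).
  by split=> x; have /andP[] := le x; rewrite ?ipNr.
have := lo x; have := hi x; have := BY x; rewrite !ipNr !ipBr => tq tp pt.
rewrite /W ipDr !ipZr.
by apply: ler_mul_diff => //; apply/andP.
Qed.

Section OperatorSum.
Context {I : eqType} (F : I -> (H -> H)).

Definition op_sum X (s : seq I) : H -> H :=
  foldr (fun i S x => S x + F i x) X s.

Lemma pos_trace_class_op_sum X (r : R) s :
  (forall i, pos_trace_class (F i)) -> (forall i, ptrace (F i) <= 1%:E)%E ->
  pos_trace_class X -> (ptrace X <= r%:E)%E ->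
  pos_trace_class (op_sum X s) /\ (ptrace (op_sum X s) <= (r + (size s)%:R)%:E)%E.
Proof.
move=> ptcF trF ptcX trX; elim: s => [|i s [ptcS trS]] /=; first by rewrite addr0.
have [ptcSi trSi] := pos_trace_class_add ptcS (ptcF i).
split=> //; apply: le_trans trSi _.
by rewrite -natr1 addrA EFinD; apply: leeD.
Qed.

Lemma op_sum_ge X s i : (forall j, psd (F j)) -> i \in s ->
  loewner_le (fun x => X x + F i x) (op_sum X s).
Proof.
move=> psdF; rewrite loewner_leE.
have base x t : ip x (X x) <= ip x (op_sum X t x).
  elim: t => //= j t IH; rewrite ipDr -[ip x (X x)]addr0.
  exact: lerD IH (psdF j x).
elim: s => //= j s IH; rewrite in_cons => /predU1P[-> x | /IH le x].
  by rewrite !ipDr lerD2r.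
by apply: le_trans (le x) _; rewrite ipDr lerDl psdF.
Qed.

End OperatorSum.
End Domination.

Lemma compact_finite_net {R : realType} {T : metricType R} {K : set T} {d : R} :
  compact K -> 0 < d ->
  exists s : seq T, (forall t, t \in s -> K t) /\
    forall x, K x -> exists2 t, t \in s & mdist t x < d.
Proof.
move=> cK d0.
(* near_covering with the filter of sequences eventually containing any given one *)
pose F := filter_from [set: seq T] (fun s0 => [set s : seq T | {subset s0 <= s}]).
have FF : Filter F.
  apply: filter_from_filter; first by exists [::].
  move=> s1 s2 _ _; exists (s1 ++ s2) => // s /= le; split=> t t_in; apply: le;
    by rewrite mem_cat t_in ?orbT.
have [|s0 _ net] := (compact_near_coveringP _).1 cK (seq T) F
  (fun s x => exists2 t, t \in s & K t /\ mdist t x < d) FF.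
  move=> x Kx; exists (ball x d, [set s : seq T | x \in s]).
    split; first exact: nbhsx_ballx.
    by exists [:: x] => // s /= /(_ x); apply; rewrite inE.
  by case=> y s /= [xy xs]; exists x => //; split => //; move: xy; rewrite ballEmdist.
exists [seq t <- s0 | `[< K t >]]; split.
  by move=> t; rewrite mem_filter => /andP[/asboolP].
move=> x Kx; have [t ts [Kt dt]] := net s0 (fun _ h => h) x Kx.
by exists t => //; rewrite mem_filter ts andbT; apply/asboolP.
Qed.

Lemma compact_continuous_unif_fst {R : realType} {T U : metricType R}
    {f : T * U -> R} {e : R} :
  compact [set: T * U] -> continuous f -> 0 < e ->
  exists2 d : R, 0 < d & forall x y u, mdist x y < d ->
    `|f (x, u) - f (y, u)| < e.
Proof.
move=> cpt fc e0.
have [|d d0 cover] := (compact_near_coveringP _).1 cpt R (0:R)^'+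
  (fun d p => forall y, mdist p.1 y < d -> `|f p - f (y, p.2)| < e) _.
  move=> p0 _.
  have [r /= r0 near_p0] := (nbhs_ballP _ _).1
    (cvgr_dist_lt _ _ (fc p0) _ (divr_gt0 e0 (ltr0n _ 2))).
  have r2 : 0 < r / 2 by rewrite divr_gt0.
  exists (ball p0 (r / 2), [set d | d < r / 2]).
    by split; [exact: nbhsx_ballx | exact: nbhs_right_lt].
  case=> p d /= [p_near d_small] y py.
  have rr : r / 2 <= r by rewrite ler_pdivrMr // ler_pMr // ler1n.
  have fp := near_p0 p (le_ball rr p_near).
  have fy : ball p0 r (y, p.2).
    split; last exact: (le_ball rr p_near.2).
    have := p_near.1; rewrite /= !ballEmdist /= => p0p.
    apply: le_lt_trans (metric_triangle _ p.1 _) _.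
    by rewrite (splitr r); apply: ltrD => //; apply: lt_trans py d_small.
  have /= fy' := near_p0 _ fy.
  rewrite (_ : f p - f (y, p.2) = (f p0 - f (y, p.2)) - (f p0 - f p)); last by ring.
  by apply: le_lt_trans (ler_normB _ _) _; rewrite (splitr e); apply: ltrD.
exists (d / 2); first by rewrite divr_gt0.
move=> x y u xy; apply: (cover (d / 2) _ _ (x, u) Logic.I y xy).
  by rewrite /ball_ /= sub0r normrN gtr0_norm ?divr_gt0 // ltr_pdivrMr // ltr_pMr // ltr1n.
by rewrite divr_gt0.
Qed.

Lemma compact_continuous_ub {R : realType} {T : topologicalType} {f : T -> R} :
  compact [set: T] -> continuous f -> exists2 M : R, 0 <= M & forall p, f p <= M.
Proof.
move=> cpt fc.
have [ne|empty] := pselect ([set: T] !=set0); last first.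
  by exists 0 => // p; exfalso; apply: empty; exists p.
have [c _ max_c] := compact_EVT_max ne cpt (continuous_subspaceT fc).
exists (Num.max (f c) 0); first by rewrite le_max lexx orbT.
by move=> p; rewrite le_max max_c ?in_setT.
Qed.

Section Regularity.
Context {R : realType} {H : HilbertSpace R} {Theta : metricType R}.
Implicit Types (T rho : Theta -> (H -> H)) (K : set Theta).

Lemma cvg0_omegaT_bound {T K} {e : R} : 0 < e ->
  omegaT T K delta @[delta --> (0:R)^'+] --> (0%R)%:E ->
  exists d, exists X : H -> H,
    [/\ 0 < d, pos_trace_class X, (ptrace X < e%:E)%E &
    forall th et, K th -> K et -> mdist th et < d ->
      loewner_le (fun x => - X x) (fun x => T th x - T et x) /\
      loewner_le (fun x => T th x - T et x) X].
Proof.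
move=> e0 omega0.
have e_nbhs : nbhs (0%R)%:E (fun u : \bar R => (u < e%:E)%E).
  by apply: open_ereal_lt'; rewrite lte_fin.
have omega_near := omega0 _ e_nbhs.
near (0:R)^'+ => d.
have d0 : 0 < d by near: d; apply: nbhs_right_gt.
have omega_small : (omegaT T K d < e%:E)%E by near: d; exact: omega_near.
have [_ [X [ptcX boundX] <-] trX] := ereal_inf_lt omega_small.
by exists d, X.
Unshelve. all: end_near.
Qed.

(* Cover K by finitely many balls of radius d around t_1, ..., t_n, on which
   rho varies by at most X; then X + rho t_1 + ... + rho t_n dominates rho on K. *)
Lemma quantum_model_dominated {rho K} : quantum_model rho -> compact K ->
  exists (Y : H -> H) (B : R), [/\ pos_trace_class Y, 0 <= B,
    (ptrace Y <= B%:E)%E & forall th, K th -> loewner_le (rho th) Y].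
Proof.
move=> [ptc_rho tr_rho _ [_ reg_rho]] cK.
have psd_rho t : psd (rho t) by case: (ptc_rho t).
have [d [X [d0 ptcX trX varX]]] := cvg0_omegaT_bound ltr01 (reg_rho K cK).
have [s [sK net]] := compact_finite_net cK d0.
have tr_rho_le t : (ptrace (rho t) <= 1%:E)%E by rewrite tr_rho.
have [ptcY trY] := pos_trace_class_op_sum rho X 1 s ptc_rho tr_rho_le ptcX (ltW trX).
exists (op_sum rho X s), (1 + (size s)%:R); split => // th Kth.
have [t ts dt] := net th Kth.
have th_t : mdist th t < d by rewrite metric_sym.
have [_ /loewner_leE rho_th] := varX th t Kth (sK t ts) th_t.
have /loewner_leE Y_ge := op_sum_ge rho X s t psd_rho ts.
apply/loewner_leE => x; apply: le_trans (Y_ge x).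
by rewrite ipDr -lerBlDr -ipBr; exact: rho_th.
Qed.

End Regularity.

Theorem lemma4 (R : realType) (H : HilbertSpace R)
    (Theta U : metricType R)
    (rho : Theta -> (H -> H)) (f : Theta * U -> R) :
  compact [set: Theta] -> compact [set: U] ->
  quantum_model rho ->
  continuous f -> (forall p, 0 <= f p) ->
  let kappa := fun (u : U) (th : Theta) (x : H) => (f (th, u))%:C *: rho th x in
  forall eps : R, 0 < eps ->
  forall K : set Theta, compact K ->
  exists (W : H -> H) (delta : R),
    [/\ 0 < delta, pos_trace_class W,
        (forall th et u, K th -> K et -> mdist th et < delta ->
           loewner_le (fun x => - W x) (fun x => kappa u th x - kappa u et x) /\
           loewner_le (fun x => kappa u th x - kappa u et x) W) &
        (ptrace W <= eps%:E)%E].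
Proof.
move=> cT cU model_rho fc f_ge0 kappa eps eps0 K cK.
have [Y [B [ptcY B0 trY Y_ge]]] := quantum_model_dominated model_rho cK.
have [ptc_rho _ _ [_ reg_rho]] := model_rho.
have cTU : compact [set: Theta * U] by rewrite -setXTT; apply: compact_setX.
have [M M0 f_le] := compact_continuous_ub cTU fc.
pose c := eps / (2 * (B + 1)).
have c0 : 0 < c by rewrite divr_gt0 // mulr_gt0 // ltr_wpDl.
have [d1 d10 f_unif] := compact_continuous_unif_fst cTU fc c0.
have M1_0 : 0 < M + 1 by rewrite ltr_wpDl.
have e0 : 0 < eps / (2 * (M + 1)) by rewrite divr_gt0 // mulr_gt0.
have [d2 [X [d20 ptcX trX varX]]] := cvg0_omegaT_bound e0 (reg_rho K cK).
exists (fun x => (M + 1)%:C *: X x + c%:C *: Y x), (Num.min d1 d2); split.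
- by rewrite lt_min d10.
- exact: pos_trace_class_comb (ltW M1_0) (ltW c0) ptcX ptcY.
- move=> th et u Kth Ket; rewrite lt_min => /andP[/f_unif f_near].
  move=> /(varX th et Kth Ket)[lo hi].
  apply: loewner_le_diff_comb lo hi _ (Y_ge et Ket).
  + by rewrite f_ge0 (le_trans (f_le _)) // lerDl.
  + exact: ltW (f_near u).
  + by case: (ptc_rho et).
- case: ptcX ptcY => _ psdX _ [_ psdY _].
  apply: le_trans (ptrace_comb_ub (ltW M1_0) (ltW c0) psdX psdY (ltW trX) trY) _.
  have -> : (M + 1) * (eps / (2 * (M + 1))) = eps / 2 by field; rewrite gt_eqF.
  have eps_half : eps / 2 = c * (B + 1) by rewrite /c; field; rewrite gt_eqF // ltr_wpDl.
  by rewrite lee_fin [X in _ <= X](splitr eps) lerD2l eps_half ler_wpM2l ?lerDl ?ltW.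
Qed.
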